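(* Assume $\delta<d$ and $\gamma\ge1$. Then $$\frac{q(z,w)}{z^\gamma w^d}\longrightarrow 1\quad\text{as } |z|\to\infty \text{ and } |w|/|z|^\alpha\to\infty,$$ and there is $R_0>0$ such that for every $R\ge R_0$ the set $W_R=\{(z,w):|z|>R,\ |w|>R|z|^\alpha\}$ satisfies $f(W_R)\subset W_R$.
   Context: Let $p(z)=z^\delta+O(z^{\delta-1})$ be a monic polynomial of degree $\delta\ge 2$, and let $q(z,w)=b(z)w^d+(\text{terms of lower degree in } w)$ be a polynomial with $d=\deg_w q\ge 2$, where $b$ is a monic polynomial of degree $\gamma$. Let $f(z,w)=(p(z),q(z,w))$. For $\delta<d$, define the rational number (possibly negative) $$\alpha=\max\Big(\Big\{\frac{-\gamma}{d-\delta}\Big\}\cup\Big\{\frac{n_j-\gamma}{d-m_j}: z^{n_j}w^{m_j}\text{ a monomial appearing in } q \text{ with nonzero coefficient},\ m_j<d\Big\}\Big).$$ *)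

From Stdlib Require Import Reals List.
Open Scope R_scope.

Definition CC : Type := (R * R)%type.
Definition Czero : CC := (0, 0).
Definition Cone : CC := (1, 0).
Definition Cadd (u v : CC) : CC := (fst u + fst v, snd u + snd v).
Definition Copp (u : CC) : CC := (- fst u, - snd u).
Definition Csub (u v : CC) : CC := Cadd u (Copp v).
Definition Cmul (u v : CC) : CC :=
  (fst u * fst v - snd u * snd v, fst u * snd v + snd u * fst v).
Definition Cinv (u : CC) : CC :=
  (fst u / (fst u ^ 2 + snd u ^ 2), - snd u / (fst u ^ 2 + snd u ^ 2)).
Definition Cdiv (u v : CC) : CC := Cmul u (Cinv v).
Fixpoint Cpow (u : CC) (n : nat) : CC :=
  match n with O => Cone | S k => Cmul u (Cpow u k) end.
Definition Cmod (u : CC) : R := sqrt (fst u ^ 2 + snd u ^ 2).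

Definition Csum (f : nat -> CC) (n : nat) : CC :=
  fold_right (fun k acc => Cadd (f k) acc) Czero (seq 0 n).

Definition peval (c : nat -> CC) (D : nat) (z : CC) : CC :=
  Csum (fun k => Cmul (c k) (Cpow z k)) (S D).

Definition qeval (a : nat -> nat -> CC) (N d : nat) (z w : CC) : CC :=
  Csum (fun n => Csum (fun m => Cmul (a n m) (Cmul (Cpow z n) (Cpow w m))) (S d)) (S N).

(* alpha = max ({-gamma/(d-delta)} U {(n_j-gamma)/(d-m_j) : a n_j m_j <> 0, m_j < d}) *)
Definition is_alpha (a : nat -> nat -> CC) (d gamma delta : nat) (alpha : R) : Prop :=
  (- INR gamma / (INR d - INR delta) <= alpha) /\
  (forall n m, a n m <> Czero -> (m < d)%nat ->
      (INR n - INR gamma) / (INR d - INR m) <= alpha) /\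
  (alpha = - INR gamma / (INR d - INR delta) \/
   exists n m, a n m <> Czero /\ (m < d)%nat /\
               alpha = (INR n - INR gamma) / (INR d - INR m)).

Definition in_W (alpha Rr : R) (z w : CC) : Prop :=
  Cmod z > Rr /\ Cmod w > Rr * Rpower (Cmod z) alpha.

From Stdlib Require Import Reals List Lra Lia Psatz.
From Coquelicot Require Complex.
Open Scope R_scope.

(* The argument is a pair of "leading term" estimates.
   1. Finite sums: if one term of a sum is close to T and all other terms are
      bounded, the sum is close to T (Csum_near).
   2. Monomial comparison: by the definition of alpha, every monomial
      z^n w^m of q with m < d satisfies M |z|^n |w|^m <= |z|^gamma |w|^d as
      soon as |z| >= M >= 1 and |w| >= M |z|^alpha (monomial_dominated).
   3. Hence |q - z^gamma w^d| <= A |z|^gamma |w|^d / M, where A is the sum of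
      the moduli of the coefficients of q, and likewise
      |p - z^delta| <= C |z|^delta / |z|.
   The limit statement follows from 3 by taking M = A/eps + 1.  For the
   invariance of W_R, 3 gives |p(z)| ~ |z|^delta and |q| >= |z|^gamma |w|^d / 2;
   the inequality gamma + alpha (d - delta) >= 0 (the first element of the set
   defining alpha) then yields |q| > R |p(z)|^alpha.
   Of the hypotheses, gamma >= 1 and the vanishing of the coefficients of p
   above delta are not used, and of is_alpha only the two lower bounds. *)

(* Elementary properties of the modulus, taken from Coquelicot (where the
   complex numbers are the same pairs of reals). *)

Lemma Cmod_mul u v : Cmod (Cmul u v) = Cmod u * Cmod v.
Proof. exact (Coquelicot.Complex.Cmod_mult u v). Qed.

Lemma Cmod_add u v : Cmod (Cadd u v) <= Cmod u + Cmod v.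
Proof. exact (Coquelicot.Complex.Cmod_triangle u v). Qed.

Lemma Cmod_ge0 u : 0 <= Cmod u.
Proof. apply sqrt_pos. Qed.

Lemma Cmod_zero : Cmod Czero = 0.
Proof. exact Coquelicot.Complex.Cmod_0. Qed.

Lemma Cmod_one : Cmod Cone = 1.
Proof. exact Coquelicot.Complex.Cmod_1. Qed.

Lemma Cmod_pow u n : Cmod (Cpow u n) = Cmod u ^ n.
Proof. induction n as [|n IH]; simpl; [apply Cmod_one | rewrite Cmod_mul, IH; ring]. Qed.

Lemma Cmod_div u v : v <> Czero -> Cmod (Cdiv u v) = Cmod u / Cmod v.
Proof.
  intro Hv. unfold Cdiv. rewrite Cmod_mul.
  exact (f_equal _ (Coquelicot.Complex.Cmod_inv v Hv)).
Qed.

Lemma Cmod_le_near u v : Cmod u <= Cmod v + Cmod (Csub u v).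
Proof.
  replace u with (Cadd v (Csub u v)) at 1 by
    (destruct u, v; unfold Cadd, Csub, Copp; simpl; f_equal; ring).
  apply Cmod_add.
Qed.

Lemma Cmod_ge_near u v : Cmod v - Cmod (Csub u v) <= Cmod u.
Proof.
  pose proof (Cmod_add u (Copp (Csub u v))) as H.
  replace (Cadd u (Copp (Csub u v))) with v in H by
    (destruct u, v; unfold Cadd, Csub, Copp; simpl; f_equal; ring).
  replace (Cmod (Copp (Csub u v))) with (Cmod (Csub u v)) in H by
    (unfold Cmod, Copp; simpl; f_equal; ring).
  lra.
Qed.

Lemma Cdiv_sub_one q D : D <> Czero -> Csub (Cdiv q D) Cone = Cdiv (Csub q D) D.
Proof.
  intro HD. destruct q as [x y], D as [u v].
  assert (u ^ 2 + v ^ 2 <> 0) by (intro E; apply HD; unfold Czero; f_equal; nra).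
  unfold Csub, Cdiv, Cmul, Cinv, Cadd, Copp, Cone; simpl; f_equal; field; nra.
Qed.

Definition cfold (f : nat -> CC) (l : list nat) : CC :=
  fold_right (fun k acc => Cadd (f k) acc) Czero l.
Definition rsum (g : nat -> R) (l : list nat) : R :=
  fold_right (fun k acc => g k + acc) 0 l.


Lemma rsum_mono g1 g2 l :
  (forall k, In k l -> g1 k <= g2 k) -> rsum g1 l <= rsum g2 l.
Proof.
  induction l as [|k l IH]; simpl; intro H; [lra|].
  assert (g1 k <= g2 k) by auto. assert (rsum g1 l <= rsum g2 l) by auto. lra.
Qed.

Lemma rsum_scal g X l : rsum (fun k => g k * X) l = rsum g l * X.
Proof. induction l as [|k l IH]; simpl; [ring | rewrite IH; ring]. Qed.

Lemma rsum_nonneg g l : (forall k, 0 <= g k) -> 0 <= rsum g l.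
Proof. intro H; induction l as [|k l IH]; simpl; [lra | specialize (H k); lra]. Qed.

Lemma cfold_sub_le f h l :
  Cmod (Csub (cfold f l) (cfold h l)) <= rsum (fun k => Cmod (Csub (f k) (h k))) l.
Proof.
  induction l as [|k l IH]; simpl.
  - replace (Csub Czero Czero) with Czero
      by (unfold Csub, Copp, Cadd, Czero; simpl; f_equal; ring).
    rewrite Cmod_zero; lra.
  - replace (Csub (Cadd (f k) (cfold f l)) (Cadd (h k) (cfold h l)))
      with (Cadd (Csub (f k) (h k)) (Csub (cfold f l) (cfold h l)))
      by (destruct (f k), (h k), (cfold f l), (cfold h l);
          unfold Csub, Cadd, Copp; simpl; f_equal; ring).
    eapply Rle_trans; [apply Cmod_add | lra].
Qed.

Lemma cfold_norm_le f g l :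
  (forall k, In k l -> Cmod (f k) <= g k) -> Cmod (cfold f l) <= rsum g l.
Proof.
  induction l as [|k l IH]; simpl; intro H.
  - rewrite Cmod_zero; lra.
  - eapply Rle_trans; [apply Cmod_add|].
    assert (Cmod (f k) <= g k) by auto. assert (Cmod (cfold f l) <= rsum g l) by auto. lra.
Qed.

Definition indicator (k0 : nat) (T : CC) (k : nat) : CC :=
  if Nat.eqb k k0 then T else Czero.

Lemma cfold_indicator_out k0 T l : ~ In k0 l -> cfold (indicator k0 T) l = Czero.
Proof.
  induction l as [|k l IH]; simpl; intro Hout; [reflexivity|].
  unfold indicator at 1. destruct (Nat.eqb_spec k k0) as [E|_]; [tauto|].
  rewrite IH by tauto. unfold Cadd, Czero; simpl; f_equal; ring.
Qed.

Lemma cfold_indicator k0 T l :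
  NoDup l -> In k0 l -> cfold (indicator k0 T) l = T.
Proof.
  induction l as [|k l IH]; simpl; intros Hnd Hin; [tauto|].
  inversion Hnd as [|? ? Hk Hnd']; subst.
  unfold indicator at 1. destruct (Nat.eqb_spec k k0) as [E|E].
  - subst. rewrite cfold_indicator_out by exact Hk.
    destruct T; unfold Cadd, Czero; simpl; f_equal; ring.
  - rewrite IH by (exact Hnd' || (destruct Hin; [congruence | assumption])).
    destruct T; unfold Cadd, Czero; simpl; f_equal; ring.
Qed.

Lemma Csum_near f K k0 T g :
  (k0 < K)%nat ->
  Cmod (Csub (f k0) T) <= g k0 ->
  (forall k, (k < K)%nat -> k <> k0 -> Cmod (f k) <= g k) ->
  Cmod (Csub (Csum f K) T) <= rsum g (seq 0 K).
Proof.
  intros Hk0 Hlead Hrest.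
  assert (HT : cfold (indicator k0 T) (seq 0 K) = T)
    by (apply cfold_indicator; [apply seq_NoDup | apply in_seq; lia]).
  rewrite <- HT.
  eapply Rle_trans; [apply cfold_sub_le|].
  apply rsum_mono. intros k Hk. apply in_seq in Hk. unfold indicator.
  destruct (Nat.eqb_spec k k0) as [E|E]; [now subst|].
  replace (Csub (f k) Czero) with (f k) by
    (destruct (f k); unfold Csub, Cadd, Copp, Czero; simpl; f_equal; ring).
  apply Hrest; lia.
Qed.

Lemma Csum_norm_le f K g :
  (forall k, (k < K)%nat -> Cmod (f k) <= g k) -> Cmod (Csum f K) <= rsum g (seq 0 K).
Proof. intro H. apply cfold_norm_le. intros k Hk. apply in_seq in Hk. apply H; lia. Qed.

(* Real powers of any base are positive (Rpower x y = exp (y ln x)). *)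
Lemma Rpower_pos x y : 0 < Rpower x y.
Proof. apply exp_pos. Qed.

Lemma pow_lower_degree Z k n : 1 <= Z -> (k < n)%nat -> Z ^ k * Z <= Z ^ n.
Proof.
  intros HZ Hkn. rewrite Rmult_comm. change (Z * Z ^ k) with (Z ^ S k).
  apply Rle_pow; [lra | lia].
Qed.

Lemma monomial_dominated Z W M alpha (n m g d : nat) :
  1 <= M -> M <= Z -> M * Rpower Z alpha <= W -> (m < d)%nat ->
  (INR n - INR g) / (INR d - INR m) <= alpha ->
  M * (Z ^ n * W ^ m) <= Z ^ g * W ^ d.
Proof.
  intros HM HMZ HW Hmd Hal.
  assert (HZ : 0 < Z) by lra.
  assert (HW0 : 0 < W) by (pose proof (Rpower_pos Z alpha); nra).
  set (k := INR (d - m)).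
  assert (Hk : k = INR d - INR m) by (apply minus_INR; lia).
  assert (Hk1 : 1 <= k) by (apply (le_INR 1); lia).
  assert (Hexp : INR n - INR g <= alpha * k).
  { replace (INR n - INR g) with ((INR n - INR g) / k * k) by (field; lra).
    apply Rmult_le_compat_r; [lra | now rewrite Hk]. }
  assert (HWk : M * Rpower Z (INR n - INR g) <= W ^ (d - m)).
  { rewrite <- Rpower_pow by lra. fold k.
    apply Rle_trans with (Rpower (M * Rpower Z alpha) k).
    - rewrite <- Rpower_mult_distr, Rpower_mult by (lra || apply Rpower_pos).
      apply Rmult_le_compat; try (left; apply Rpower_pos) || lra.
      + rewrite <- (Rpower_1 M) at 1 by lra. apply Rle_Rpower; lra.
      + apply Rle_Rpower; lra.
    - pose proof (Rpower_pos Z alpha).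
      apply Rle_Rpower_l; [lra | split; [nra | exact HW]]. }
  assert (HZn : Z ^ g * Rpower Z (INR n - INR g) = Z ^ n).
  { rewrite <- !Rpower_pow, <- Rpower_plus by lra. f_equal; ring. }
  replace (W ^ d) with (W ^ m * W ^ (d - m)) by (rewrite <- pow_add; f_equal; lia).
  rewrite <- HZn.
  assert (0 < Z ^ g * W ^ m) by (apply Rmult_lt_0_compat; apply pow_lt; lra).
  nra.
Qed.

Lemma Rpower_within_factor2 x Y alpha :
  0 < Y -> Y / 2 <= x <= 2 * Y ->
  Rpower x alpha <= Rpower 2 (Rabs alpha) * Rpower Y alpha.
Proof.
  intros HY Hx.
  destruct (Rle_lt_dec 0 alpha) as [Hal|Hal].
  - rewrite Rabs_right, Rpower_mult_distr by lra.
    apply Rle_Rpower_l; lra.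
  - rewrite Rabs_left by lra.
    replace (Rpower 2 (- alpha)) with (Rpower (/ 2) alpha)
      by (rewrite Rpower_Ropp; unfold Rpower; rewrite ln_Rinv, <- exp_Ropp by lra;
          f_equal; ring).
    rewrite Rpower_mult_distr by lra.
    replace alpha with (- - alpha) by ring. rewrite !(Rpower_Ropp _ (- alpha)).
    apply Rinv_le_contravar; [apply Rpower_pos|].
    apply Rle_Rpower_l; lra.
Qed.

(* gamma + alpha (d - delta) >= 0 means that on |z| >= 1 the size
   |z|^gamma (|z|^alpha)^d of the leading monomial of q at the boundary of
   W_R dominates (|z|^delta)^alpha. *)
Lemma boundary_exponent_dominates Z alpha (gamma d delta : nat) :
  1 <= Z -> (delta < d)%nat -> - INR gamma / (INR d - INR delta) <= alpha ->
  Rpower Z (INR delta * alpha) <= Z ^ gamma * Rpower Z alpha ^ d.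
Proof.
  intros HZ Hdd Hal.
  assert (Hdlt : INR delta < INR d) by (apply lt_INR; lia).
  assert (Hnn : - INR gamma <= alpha * (INR d - INR delta)).
  { replace (- INR gamma) with (- INR gamma / (INR d - INR delta) * (INR d - INR delta))
      by (field; lra).
    apply Rmult_le_compat_r; lra. }
  rewrite <- !Rpower_pow, Rpower_mult, <- Rpower_plus by (lra || apply Rpower_pos).
  apply Rle_Rpower; lra.
Qed.

Definition coef_mass_p (c : nat -> CC) (delta : nat) : R :=
  rsum (fun k => Cmod (c k)) (seq 0 (S delta)).

Lemma peval_near_leading (c : nat -> CC) (delta : nat) (Hpmonic : c delta = Cone) z :
  1 <= Cmod z ->
  Cmod (Csub (peval c delta z) (Cpow z delta)) <=
  coef_mass_p c delta * (Cmod z ^ delta / Cmod z).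
Proof.
  intros HZ. set (X := Cmod z ^ delta / Cmod z).
  assert (HX : 0 <= X) by
    (apply Rmult_le_pos; [apply pow_le, Cmod_ge0 | left; apply Rinv_0_lt_compat; lra]).
  unfold coef_mass_p. rewrite <- rsum_scal.
  apply (Csum_near _ _ delta); [lia | | ].
  - rewrite Hpmonic.
    replace (Csub (Cmul Cone (Cpow z delta)) (Cpow z delta)) with Czero
      by (destruct (Cpow z delta); unfold Csub, Cmul, Cadd, Copp, Cone, Czero;
          simpl; f_equal; ring).
    rewrite Cmod_zero. apply Rmult_le_pos; [apply Cmod_ge0 | exact HX].
  - intros k Hk Hkd. rewrite Cmod_mul, Cmod_pow.
    apply Rmult_le_compat_l; [apply Cmod_ge0|].
    pose proof (pow_lower_degree (Cmod z) k delta HZ ltac:(lia)).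
    unfold X. apply (Rmult_le_reg_r (Cmod z)); [lra|].
    replace (Cmod z ^ delta / Cmod z * Cmod z) with (Cmod z ^ delta) by (field; lra).
    lra.
Qed.

Definition coef_mass_q (a : nat -> nat -> CC) (N d : nat) : R :=
  rsum (fun n => rsum (fun m => Cmod (a n m)) (seq 0 (S d))) (seq 0 (S N)).

Section LeadingTermQ.

Variables (a : nat -> nat -> CC) (N d gamma : nat) (alpha : R).
Hypothesis Hsupp : forall n m, (N < n)%nat \/ (d < m)%nat -> a n m = Czero.
Hypothesis Hbmonic : a gamma d = Cone.
Hypothesis Hbdeg : forall n, (gamma < n)%nat -> a n d = Czero.
Hypothesis Hal : forall n m, a n m <> Czero -> (m < d)%nat ->
  (INR n - INR gamma) / (INR d - INR m) <= alpha.

Definition qterm (z w : CC) (n m : nat) : CC :=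
  Cmul (a n m) (Cmul (Cpow z n) (Cpow w m)).

Variables (z w : CC) (M : R).
Hypotheses (HM : 1 <= M) (HMz : M <= Cmod z) (HMw : M * Rpower (Cmod z) alpha <= Cmod w).

Lemma qterm_dominated n m :
  (m <= d)%nat -> (n, m) <> (gamma, d) ->
  Cmod (qterm z w n m) <= Cmod (a n m) * (Cmod z ^ gamma * Cmod w ^ d / M).
Proof.
  intros Hmd Hnm. unfold qterm. rewrite !Cmod_mul, !Cmod_pow.
  destruct (Req_dec (Cmod (a n m)) 0) as [Ha0|Ha0]; [rewrite Ha0; lra|].
  assert (Ha : a n m <> Czero) by (intro E; apply Ha0; rewrite E; apply Cmod_zero).
  apply Rmult_le_compat_l; [apply Cmod_ge0|].
  apply (Rmult_le_reg_l M); [lra|].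
  replace (M * (Cmod z ^ gamma * Cmod w ^ d / M)) with (Cmod z ^ gamma * Cmod w ^ d)
    by (field; lra).
  destruct (Nat.eq_dec m d) as [Emd|Emd].
  - (* top degree in w: b has degree gamma, so n < gamma *)
    subst m. assert (Hng : (n < gamma)%nat).
    { destruct (Nat.lt_ge_cases n gamma) as [|Hge]; [assumption|].
      destruct (Nat.eq_dec n gamma) as [->|Hne]; [congruence|].
      exfalso. apply Ha, Hbdeg. lia. }
    pose proof (pow_lower_degree (Cmod z) n gamma ltac:(lra) Hng).
    pose proof (pow_le (Cmod w) d (Cmod_ge0 w)).
    pose proof (pow_le (Cmod z) n (Cmod_ge0 z)).
    assert (M * Cmod z ^ n <= Cmod z ^ gamma) by nra.
    nra.
  - apply (monomial_dominated _ _ _ alpha); try assumption; [lia|].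
    apply Hal; [exact Ha | lia].
Qed.

Lemma qeval_near_leading :
  Cmod (Csub (qeval a N d z w) (Cmul (Cpow z gamma) (Cpow w d))) <=
  coef_mass_q a N d * (Cmod z ^ gamma * Cmod w ^ d / M).
Proof.
  set (B := Cmod z ^ gamma * Cmod w ^ d / M).
  set (D := Cmul (Cpow z gamma) (Cpow w d)).
  assert (HB : 0 <= B) by
    (apply Rmult_le_pos; [apply Rmult_le_pos; apply pow_le, Cmod_ge0
                         | left; apply Rinv_0_lt_compat; lra]).
  assert (HgN : (gamma <= N)%nat).
  { destruct (Nat.le_gt_cases gamma N) as [|Hlt]; [assumption|].
    assert (E : a gamma d = Czero) by (apply Hsupp; auto).
    rewrite Hbmonic in E. unfold Cone, Czero in E. injection E; lra. }
  unfold coef_mass_q. rewrite <- rsum_scal.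
  unfold qeval. apply (Csum_near _ _ gamma); [lia | | ].
  - rewrite <- rsum_scal. apply (Csum_near _ _ d); [lia | | ].
    + rewrite Hbmonic.
      replace (Csub (Cmul Cone (Cmul (Cpow z gamma) (Cpow w d))) D) with Czero
        by (unfold D; destruct (Cmul (Cpow z gamma) (Cpow w d));
            unfold Csub, Cmul, Cadd, Copp, Cone, Czero; simpl; f_equal; ring).
      rewrite Cmod_zero. apply Rmult_le_pos; [apply Cmod_ge0 | exact HB].
    + intros m Hm Hmd. apply (qterm_dominated gamma m); [lia | congruence].
  - intros n Hn Hng. rewrite <- rsum_scal. apply Csum_norm_le.
    intros m Hm. apply (qterm_dominated n m); [lia | congruence].
Qed.

Lemma qeval_lower_bound :
  2 * coef_mass_q a N d <= M ->
  Cmod z ^ gamma * Cmod w ^ d / 2 <= Cmod (qeval a N d z w).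
Proof.
  intros HA.
  pose proof (Cmod_ge_near (qeval a N d z w) (Cmul (Cpow z gamma) (Cpow w d))) as Hge.
  pose proof qeval_near_leading as Hnear.
  rewrite Cmod_mul, !Cmod_pow in Hge.
  assert (HDD : 0 <= Cmod z ^ gamma * Cmod w ^ d)
    by (apply Rmult_le_pos; apply pow_le, Cmod_ge0).
  assert (Hsmall : coef_mass_q a N d * (Cmod z ^ gamma * Cmod w ^ d / M)
                   <= Cmod z ^ gamma * Cmod w ^ d / 2).
  { apply (Rmult_le_reg_r M); [lra|].
    replace (coef_mass_q a N d * (Cmod z ^ gamma * Cmod w ^ d / M) * M)
      with (coef_mass_q a N d * (Cmod z ^ gamma * Cmod w ^ d)) by (field; lra).
    nra. }
  lra.
Qed.

End LeadingTermQ.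

Lemma qeval_ratio_tends_to_one (a : nat -> nat -> CC) (N d gamma : nat) (alpha : R)
  (Hsupp : forall n m, (N < n)%nat \/ (d < m)%nat -> a n m = Czero)
  (Hbmonic : a gamma d = Cone)
  (Hbdeg : forall n, (gamma < n)%nat -> a n d = Czero)
  (Hal : forall n m, a n m <> Czero -> (m < d)%nat ->
     (INR n - INR gamma) / (INR d - INR m) <= alpha) :
  forall eps, eps > 0 -> exists M, forall z w,
    Cmod z > M -> Cmod w / Rpower (Cmod z) alpha > M ->
    Cmod (Csub (Cdiv (qeval a N d z w) (Cmul (Cpow z gamma) (Cpow w d))) Cone) < eps.
Proof.
  intros eps Heps. set (A := coef_mass_q a N d).
  assert (HA : 0 <= A) by (apply rsum_nonneg; intro; apply rsum_nonneg; intro; apply Cmod_ge0).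
  exists (A / eps + 1). intros z w Hz Hw.
  set (M := A / eps + 1) in *.
  assert (HM : A < eps * M) by (unfold M; field_simplify; lra).
  assert (HM1 : 1 <= M) by (unfold M; assert (0 <= A / eps) by
    (apply Rmult_le_pos; [lra | left; apply Rinv_0_lt_compat; lra]); lra).
  pose proof (Rpower_pos (Cmod z) alpha) as HP.
  assert (HMw : M * Rpower (Cmod z) alpha <= Cmod w).
  { apply Rlt_le, (Rmult_lt_reg_r (/ Rpower (Cmod z) alpha));
      [apply Rinv_0_lt_compat; lra|].
    rewrite Rmult_assoc, Rinv_r by lra. lra. }
  pose proof (qeval_near_leading a N d gamma alpha Hsupp Hbmonic Hbdeg Hal z w M
                HM1 ltac:(lra) HMw) as Hnear.
  set (D := Cmul (Cpow z gamma) (Cpow w d)) in *.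
  assert (HD : Cmod D = Cmod z ^ gamma * Cmod w ^ d)
    by (unfold D; rewrite Cmod_mul, !Cmod_pow; reflexivity).
  assert (HD0 : 0 < Cmod D) by
    (rewrite HD; apply Rmult_lt_0_compat; [apply pow_lt; lra | apply pow_lt; nra]).
  rewrite Cdiv_sub_one, Cmod_div by (intro E; rewrite E, Cmod_zero in HD0; lra).
  fold A in Hnear. rewrite <- HD in Hnear.
  apply (Rmult_lt_reg_r (Cmod D)); [lra|].
  replace (Cmod (Csub (qeval a N d z w) D) / Cmod D * Cmod D)
    with (Cmod (Csub (qeval a N d z w) D)) by (field; lra).
  apply (Rle_lt_trans _ _ _ Hnear).
  apply (Rmult_lt_reg_r M); [lra|].
  replace (A * (Cmod D / M) * M) with (A * Cmod D) by (field; lra). nra.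
Qed.

Lemma peval_comparable (c : nat -> CC) (delta : nat) (Hpmonic : c delta = Cone) z :
  1 <= Cmod z -> 2 * coef_mass_p c delta <= Cmod z ->
  Cmod z ^ delta / 2 <= Cmod (peval c delta z) <= 2 * Cmod z ^ delta.
Proof.
  intros HZ1 HZC.
  pose proof (peval_near_leading c delta Hpmonic z HZ1) as Hnear.
  pose proof (pow_le (Cmod z) delta (Cmod_ge0 z)).
  assert (Hsmall : Cmod (Csub (peval c delta z) (Cpow z delta)) <= Cmod z ^ delta / 2).
  { eapply Rle_trans; [exact Hnear|].
    apply (Rmult_le_reg_r (Cmod z)); [lra|].
    replace (coef_mass_p c delta * (Cmod z ^ delta / Cmod z) * Cmod z)
      with (coef_mass_p c delta * Cmod z ^ delta) by (field; lra).
    nra. }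
  pose proof (Cmod_le_near (peval c delta z) (Cpow z delta)).
  pose proof (Cmod_ge_near (peval c delta z) (Cpow z delta)).
  rewrite Cmod_pow in *. lra.
Qed.

Lemma W_forward_invariant
  (c : nat -> CC) (delta : nat) (Hdelta : (2 <= delta)%nat) (Hpmonic : c delta = Cone)
  (a : nat -> nat -> CC) (N d gamma : nat) (alpha : R)
  (Hsupp : forall n m, (N < n)%nat \/ (d < m)%nat -> a n m = Czero)
  (Hbmonic : a gamma d = Cone)
  (Hbdeg : forall n, (gamma < n)%nat -> a n d = Czero)
  (Hal0 : - INR gamma / (INR d - INR delta) <= alpha)
  (Hal : forall n m, a n m <> Czero -> (m < d)%nat ->
     (INR n - INR gamma) / (INR d - INR m) <= alpha)
  (Hdd : (delta < d)%nat) :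
  exists R0, R0 > 0 /\ forall Rr, Rr >= R0 -> forall z w,
    in_W alpha Rr z w -> in_W alpha Rr (peval c delta z) (qeval a N d z w).
Proof.
  set (A := coef_mass_q a N d). set (C := coef_mass_p c delta).
  set (K := Rpower 2 (Rabs alpha)).
  assert (HA : 0 <= A) by (apply rsum_nonneg; intro; apply rsum_nonneg; intro; apply Cmod_ge0).
  assert (HC : 0 <= C) by (apply rsum_nonneg; intro; apply Cmod_ge0).
  assert (HK : 0 < K) by apply Rpower_pos.
  exists (2 + 2 * A + 2 * C + 2 * K). split; [lra|].
  intros Rr HR z w [Hz Hw].
  set (Z := Cmod z) in *. set (P := Rpower Z alpha) in *.
  assert (HP : 0 < P) by apply Rpower_pos.
  assert (HZ1 : 1 <= Z) by lra. assert (HZC : 2 * C <= Z) by lra.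
  destruct (peval_comparable c delta Hpmonic z HZ1 HZC) as [Hplo Hphi].
  fold Z in Hplo, Hphi.
  assert (HZ2 : Z ^ 2 <= Z ^ delta) by (apply Rle_pow; [lra | lia]).
  split.
  { (* |p(z)| >= |z|^delta / 2 >= |z|^2 / 2 > R *) simpl in HZ2. nra. }
  (* |q| >= |z|^gamma |w|^d / 2 > R^d |z|^(delta alpha) / 2 *)
  assert (HR1 : 1 <= Rr) by lra. assert (HRZ : Rr <= Z) by lra.
  assert (HRw : Rr * P <= Cmod w) by lra. assert (HRA : 2 * A <= Rr) by lra.
  pose proof (qeval_lower_bound a N d gamma alpha Hsupp Hbmonic Hbdeg Hal z w Rr
                HR1 HRZ HRw HRA) as Hq.
  fold Z in Hq.
  set (E := Rpower Z (INR delta * alpha)).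
  assert (HE : 0 < E) by apply Rpower_pos.
  assert (HWd : (Rr * P) ^ d <= Cmod w ^ d) by (apply pow_incr; nra).
  rewrite Rpow_mult_distr in HWd.
  pose proof (boundary_exponent_dominates Z alpha gamma d delta ltac:(lra) Hdd Hal0) as Hexp.
  fold E P in Hexp.
  assert (HRd : 0 <= Rr ^ d) by (apply pow_le; lra).
  assert (HZg : 0 <= Z ^ gamma) by (apply pow_le; lra).
  assert (HDD : Rr ^ d * E <= Z ^ gamma * Cmod w ^ d).
  { apply Rle_trans with (Rr ^ d * (Z ^ gamma * P ^ d)); [nra|].
    replace (Rr ^ d * (Z ^ gamma * P ^ d)) with (Z ^ gamma * (Rr ^ d * P ^ d)) by ring.
    apply Rmult_le_compat_l; assumption. }
  assert (Hpa : Rpower (Cmod (peval c delta z)) alpha <= K * E).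
  { unfold E. rewrite <- Rpower_mult, Rpower_pow by lra.
    apply Rpower_within_factor2; [apply pow_lt; lra | lra]. }
  assert (HR2 : 2 * K * Rr < Rr ^ d).
  { apply Rlt_le_trans with (Rr ^ 2); [simpl; nra | apply Rle_pow; [lra | lia]]. }
  assert (Rr * Rpower (Cmod (peval c delta z)) alpha <= Rr * (K * E))
    by (apply Rmult_le_compat_l; lra).
  assert (2 * K * Rr * E < Rr ^ d * E) by (apply Rmult_lt_compat_r; lra).
  unfold in_W. lra.
Qed.

Theorem lemma5p3
  (c : nat -> CC) (delta : nat)
  (Hdelta : (2 <= delta)%nat)
  (Hpmonic : c delta = Cone)
  (Hpdeg : forall k, (delta < k)%nat -> c k = Czero)
  (a : nat -> nat -> CC) (N d gamma : nat)
  (Hd : (2 <= d)%nat)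
  (Hsupp : forall n m, (N < n)%nat \/ (d < m)%nat -> a n m = Czero)
  (Hbmonic : a gamma d = Cone)
  (Hbdeg : forall n, (gamma < n)%nat -> a n d = Czero)
  (alpha : R) (Halpha : is_alpha a d gamma delta alpha)
  (Hdd : (delta < d)%nat) (Hgamma : (1 <= gamma)%nat) :
  (forall eps, eps > 0 -> exists M, forall z w,
      Cmod z > M -> Cmod w / Rpower (Cmod z) alpha > M ->
      Cmod (Csub (Cdiv (qeval a N d z w) (Cmul (Cpow z gamma) (Cpow w d))) Cone) < eps)
  /\
  (exists R0, R0 > 0 /\ forall Rr, Rr >= R0 -> forall z w,
      in_W alpha Rr z w -> in_W alpha Rr (peval c delta z) (qeval a N d z w)).
Proof.
  (* only the lower bounds on alpha are needed, not that it is attained *)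
  destruct Halpha as [Hal0 [Hal _]].
  split.
  - exact (qeval_ratio_tends_to_one a N d gamma alpha Hsupp Hbmonic Hbdeg Hal).
  - exact (W_forward_invariant c delta Hdelta Hpmonic a N d gamma alpha
             Hsupp Hbmonic Hbdeg Hal0 Hal Hdd).
Qed.
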